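(* Let $P$ be a transition kernel on $\mathbb{R}^d$. Suppose there is a constant $K<\infty$ such that for every $x\in\mathbb{R}^d$ and $Y_x\sim P(x,\cdot)$ there exists a random variable $W_x$ with $\mathbb{E}\|W_x\|\le K$ and $\|Y_x\|\le\|x\|+\|W_x\|$ almost surely. Assume moreover that there exist $R>0$, $\ell\in(0,1]$ and $\widetilde\ell\in[0,1)$ such that for every $x$ with $\|x\|>R$ there is a Borel set $D_x\subseteq\mathbb{R}^d$ with (a) $P(x,D_x)\ge\ell$, and (b) $\sup_{y\in D_x}\|y\|\le\widetilde\ell\|x\|$. Then $V(x):=\|x\|$ is a Lyapunov function for $P$ with $L:=R+K$ and $\delta:=1-(1-\widetilde\ell)\ell<1$, i.e. $\int V(y)\,P(x,\mathrm{d}y)\le\delta V(x)+L$ for all $x\in\mathbb{R}^d$.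
   Context: $\|\cdot\|$ denotes the Euclidean norm on $\mathbb{R}^d$. A function $V\colon\mathbb{R}^d\to[0,\infty)$ is a Lyapunov function of a transition kernel $P$ with $\delta\in[0,1)$ and $L\in[0,\infty)$ if $\int_{\mathbb{R}^d}V(y)P(x,\mathrm{d}y)\le\delta V(x)+L$ for all $x\in\mathbb{R}^d$. *)

From HB Require Import structures.
From mathcomp Require Import all_boot all_order all_algebra.
From mathcomp Require Import all_classical all_reals all_analysis.
Set Implicit Arguments. Unset Strict Implicit. Unset Printing Implicit Defensive.
Import Order.TTheory GRing.Theory Num.Theory.
Import numFieldNormedType.Exports.
Local Open Scope classical_set_scope.
Local Open Scope ring_scope.

(* R^d, as row vectors, equipped with its Borel sigma-algebra (generated by the
   open sets of the product topology, which is the Euclidean topology). *)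
Definition Rd (R : realType) (d : nat) : Type :=
  g_sigma_algebraType (@open 'rV[R]_d).

Definition enorm (R : realType) (d : nat) (x : 'rV[R]_d) : R :=
  Num.sqrt (\sum_(i < d) x ord0 i ^+ 2).

Definition lyapunov (R : realType) (d : nat) (P : R.-pker (Rd R d) ~> (Rd R d))
  (V : Rd R d -> R) (delta L : R) : Prop :=
  [/\ (forall x, 0 <= V x), 0 <= delta, delta < 1, 0 <= L &
   forall x : Rd R d,
     (\int[P x]_y (V y)%:E <= (delta * V x + L)%:E)%E].

From HB Require Import structures.
From mathcomp Require Import all_boot all_order all_algebra.
From mathcomp Require Import all_classical all_reals all_analysis.
From mathcomp Require Import measurable_realfun.
From mathcomp Require Import lra.
Set Implicit Arguments. Unset Strict Implicit. Unset Printing Implicit Defensive.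
Import Order.TTheory GRing.Theory Num.Theory.
Import numFieldNormedType.Exports.
Local Open Scope classical_set_scope.
Local Open Scope ring_scope.

(* Couple [Y ~ P(x, .)] with [W].  On the event [Y \in D] we have
   [|Y| <= ellt |x|], elsewhere [|Y| <= |x| + |W|]; in both cases
   [|Y| + (1 - ellt) |x| 1_D(Y) <= |x| + |W|].  Taking expectations gives
   [E|Y| <= |x| - (1 - ellt) ell |x| + K] when [|x| > R0], while for
   [|x| <= R0] the crude bound [E|Y| <= |x| + K] is at most [delta |x| + R0 + K]. *)

Section euclidean_norm.
Variables (R : realType) (d : nat).

Lemma enorm_ge0 (x : 'rV[R]_d) : 0 <= enorm x.
Proof. exact: sqrtr_ge0. Qed.

Lemma continuous_enorm : continuous (@enorm R d).
Proof.
move=> x; apply: continuous_comp; last exact: sqrt_continuous.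
apply: (continuous_big (op := +%R) (x0 := 0)) => //; first exact: add_continuous.
by move=> i _ y; apply: continuousM; exact: coord_continuous.
Qed.

Lemma continuous_measurable_Rd (f : 'rV[R]_d -> R) :
  continuous f -> measurable_fun [set: Rd R d] f.
Proof.
move=> cf; apply: (measurability _ (RGenOpens.measurableE R)).
move=> _ [_ [a [b ->] <-]]; rewrite setTI; apply: sub_sigma_algebra.
by move/continuousP : cf; apply; exact: interval_open.
Qed.

Lemma measurable_enorm : measurable_fun [set: Rd R d] (@enorm R d).
Proof. exact: continuous_measurable_Rd continuous_enorm. Qed.

End euclidean_norm.

Section integral_bounds.
Local Open Scope ereal_scope.

Lemma ge0_integral_law d1 d2 (O : measurableType d1) (T : measurableType d2)
    (R : realType) (mu : measure O R) (nu : measure T R) (Y : O -> T)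
    (f : T -> \bar R) :
  measurable_fun [set: O] Y ->
  (forall A, measurable A -> mu (Y @^-1` A) = nu A) ->
  measurable_fun [set: T] f -> (forall y, 0 <= f y) ->
  \int[nu]_y f y = \int[mu]_w f (Y w).
Proof.
move=> mY lawY mf f0.
rewrite (eq_measure_integral (pushforward mu Y)) => [|A mA _].
  by rewrite ge0_integral_pushforward.
by rewrite -lawY.
Qed.

Lemma ae_le_integral_indic d (T : measurableType d) (R : realType)
    (Pr : probability T R) (f g : T -> R) (A : set T) (a c : R) :
  measurable_fun [set: T] f -> measurable_fun [set: T] g -> measurable A ->
  (forall w, 0 <= f w)%R -> (forall w, 0 <= g w)%R -> (0 <= a)%R -> (0 <= c)%R ->
  {ae Pr, forall w, f w + c * \1_A w <= a + g w}%R ->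
  \int[Pr]_w (f w)%:E + c%:E * Pr A <= a%:E + \int[Pr]_w (g w)%:E.
Proof.
move=> mf mg mA f0 g0 a0 c0 fg.
have mfE : measurable_fun [set: T] (fun w => (f w)%:E) by exact/measurable_EFinP.
have mgE : measurable_fun [set: T] (fun w => (g w)%:E) by exact/measurable_EFinP.
have mcA : measurable_fun [set: T] (fun w => (c * \1_A w)%:E).
  exact/measurable_EFinP/measurable_funM/measurable_indic.
have f0E w : [set: T] w -> 0 <= (f w)%:E by rewrite lee_fin.
have g0E w : [set: T] w -> 0 <= (g w)%:E by rewrite lee_fin.
have cA0 w : [set: T] w -> 0 <= (c * \1_A w)%:E by rewrite lee_fin mulr_ge0.
have a0E w : [set: T] w -> 0 <= a%:E by rewrite lee_fin.
have -> : c%:E * Pr A = \int[Pr]_w (c * \1_A w)%:E.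
  rewrite (integralZl_indic _ (fun=> A)) ?integral_indic ?setIT //.
  by rewrite ltNge c0.
rewrite -[a%:E]mule1 -(probability_setT Pr) -integral_cst //.
rewrite -!ge0_integralD //.
apply: ae_ge0_le_integral => //.
- by move=> w _; rewrite adde_ge0 ?f0E ?cA0.
- exact: emeasurable_funD.
- by move=> w _; rewrite adde_ge0 ?a0E ?g0E.
- by apply: emeasurable_funD => //; exact: measurable_cst.
by apply: filterS fg => w fgw _; rewrite -!EFinD lee_fin.
Qed.

End integral_bounds.

Section kernel_drift.
Local Open Scope ereal_scope.
Variables (R : realType) (d : nat) (P : R.-pker (Rd R d) ~> (Rd R d)) (K : R).
Hypothesis hW : forall x : Rd R d,
  exists (dO : measure_display) (O : measurableType dO)
         (Pr : probability O R) (Y W : O -> Rd R d),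
    [/\ measurable_fun setT Y, measurable_fun setT W,
        (forall A : set (Rd R d), measurable A -> Pr (Y @^-1` A) = P x A),
        (\int[Pr]_w (enorm (W w))%:E <= K%:E)%E &
        {ae Pr, forall w, enorm (Y w) <= enorm x + enorm (W w)}%R].

Lemma coupling_bound_ge0 : (0 <= K)%R.
Proof.
have [dO [Om [Pr [Y [W [_ _ _ WK _]]]]]] := hW (0%R : 'rV[R]_d).
rewrite -lee_fin; apply: le_trans WK; apply: integral_ge0 => w _.
by rewrite lee_fin enorm_ge0.
Qed.

Lemma enorm_kernel_drift (x : Rd R d) (D : set (Rd R d)) (ellt : R) :
  (ellt <= 1)%R -> measurable D ->
  (forall y, D y -> enorm y <= ellt * enorm x)%R ->
  \int[P x]_y (enorm y)%:E + ((1 - ellt) * enorm x)%:E * P x D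
    <= (enorm x + K)%:E.
Proof.
move=> ellt1 mD Dle.
have [dO [Om [Pr [Y [W [mY mW lawY WK Ydom]]]]]] := hW x.
have mnY := measurableT_comp (@measurable_enorm R d) mY.
have mnW := measurableT_comp (@measurable_enorm R d) mW.
have mYD : measurable (Y @^-1` D) by rewrite -[_ @^-1` _]setTI; exact: mY.
have c0 : (0 <= (1 - ellt) * enorm x)%R by rewrite mulr_ge0 ?subr_ge0 ?enorm_ge0.
rewrite (ge0_integral_law mY lawY); last 2 first.
- by apply/measurable_EFinP; exact: measurable_enorm.
- by move=> y; rewrite lee_fin enorm_ge0.
rewrite -lawY // EFinD.
apply: le_trans (leeD2l _ WK).
apply: ae_le_integral_indic; rewrite ?enorm_ge0 //; try by move=> w; exact: enorm_ge0.
apply: filterS Ydom => w Yle; rewrite indicE.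
have [/[!inE] /Dle YD|_] := boolP (w \in Y @^-1` D); last by rewrite mulr0 addr0.
by have := enorm_ge0 (W w); rewrite mulr1; lra.
Qed.

End kernel_drift.

Theorem proposition2 (R : realType) (d : nat)
  (P : R.-pker (Rd R d) ~> (Rd R d)) (K : R)
  (hW : forall x : Rd R d,
     exists (dO : measure_display) (O : measurableType dO)
            (Pr : probability O R) (Y W : O -> Rd R d),
       [/\ measurable_fun setT Y, measurable_fun setT W,
           (forall A : set (Rd R d), measurable A -> Pr (Y @^-1` A) = P x A),
           (\int[Pr]_w (enorm (W w))%:E <= K%:E)%E &
           {ae Pr, forall w, enorm (Y w) <= enorm x + enorm (W w)}])
  (R0 ell ellt : R) (hR0 : 0 < R0)
  (hell : 0 < ell <= 1) (hellt : 0 <= ellt < 1)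
  (hD : forall x : Rd R d, R0 < enorm x ->
     exists D : set (Rd R d),
       [/\ measurable D, (ell%:E <= P x D)%E &
           (forall y, D y -> enorm y <= ellt * enorm x)]) :
  lyapunov P (@enorm R d) (1 - (1 - ellt) * ell) (R0 + K).
Proof.
have [ell0 ell1] := andP hell; have [ellt0 ellt1] := andP hellt.
have K0 := coupling_bound_ge0 hW.
split=> [y||||x]; [exact: enorm_ge0|nra|nra|lra|].
have nx0 := enorm_ge0 x.
have [xR|Rx] := leP (enorm x) R0.
  have := enorm_kernel_drift hW (x := x) (ltW ellt1) measurable0 (fun _ => False_ind _).
  rewrite measure0 mule0 adde0 => /le_trans; apply; rewrite lee_fin.
  have : (1 - ellt) * ell * enorm x <= enorm x by rewrite ler_piMl ?mulr_ge0 //; nra.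
  lra.
have [D [mD PD Dle]] := hD x Rx.
have cell : (((1 - ellt) * enorm x * ell)%:E <= ((1 - ellt) * enorm x)%:E * P x D)%E.
  by rewrite EFinM lee_wpmul2l // lee_fin mulr_ge0 // subr_ge0 ltW.
have := enorm_kernel_drift hW (ltW ellt1) mD Dle.
move=> /(le_trans (leeD2l _ cell)); rewrite -leeBrDr // -EFinB => /le_trans; apply.
by rewrite lee_fin; nra.
Qed.
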